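(* Let $H$ be a separable Hilbert space, $(\Omega,\mathcal{A},\mu)$ a measure space, and $V:H\to L^2_\mu(\Omega)$ an invertible bounded linear operator. Let $G:=V^{\mathsf{T}}V$ and let $d$ be the metric on $H$ given by $$d(x_1,x_2)^2:=\inf_{\gamma\in\Gamma(x_1,x_2)}\int_0^1\langle G\dot\gamma(s),\dot\gamma(s)\rangle_H\,\mathrm{d}s.$$ Let $\mathcal{F}:H\to\mathbb{R}$ be $\tilde\lambda$-convex on $H$ for some $\tilde\lambda\in\mathbb{R}$. Then $\mathcal{F}$ is geodesically $\lambda$-convex with respect to $d$, where $\lambda:=\tilde\lambda\|V\|^{-2}$ if $\tilde\lambda>0$ and $\lambda:=\tilde\lambda\|V^{-1}\|^2$ if $\tilde\lambda\le0$.
   Context: $V^{\mathsf{T}}$ is the Hilbert-space adjoint of $V$; $\|V\|$ and $\|V^{-1}\|$ are the operator norms in $L(H,L^2_\mu(\Omega))$ and $L(L^2_\mu(\Omega),H)$. $\Gamma(x_1,x_2)$ is the set of curves $\gamma\in C^1([0,1],H)$ with $\gamma(0)=x_1,\gamma(1)=x_2$. $\tilde\lambda$-convexity on $H$ means $\mathcal{F}((1-\theta)x_1+\theta x_2)\le(1-\theta)\mathcal{F}(x_1)+\theta\mathcal{F}(x_2)-\tilde\lambda\frac{\theta(1-\theta)}{2}\|x_1-x_2\|_H^2$ for all $x_1,x_2\in H$, $\theta\in[0,1]$. Geodesic $\lambda$-convexity w.r.t. $d$ means: for every constant-speed geodesic $\gamma:[0,1]\to H$ of $(H,d)$ and every $\theta\in[0,1]$,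 $\mathcal{F}(\gamma(\theta))\le(1-\theta)\mathcal{F}(\gamma(0))+\theta\mathcal{F}(\gamma(1))-\lambda\frac{\theta(1-\theta)}{2}d(\gamma(0),\gamma(1))^2$. *)

From HB Require Import structures.
From mathcomp Require Import all_boot all_order all_algebra.
From mathcomp Require Import all_classical all_reals all_analysis.
Set Implicit Arguments. Unset Strict Implicit. Unset Printing Implicit Defensive.
Import Order.TTheory GRing.Theory Num.Def Num.Theory.
Import numFieldNormedType.Exports.
Local Open Scope classical_set_scope.
Local Open Scope ring_scope.

(* elements of L^2: measurable real functions with finite L^2 norm
   (representatives; a.e.-equality handled explicitly) *)
Definition two_ge1 {R : realType} : ((1 : \bar R) <= 2%:E)%E := lee1n 2.

Definition L2 d (Omega : measurableType d) (R : realType)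
  (mu : {measure set Omega -> \bar R}) := LfunType mu (@two_ge1 R).

Definition L2norm d (Omega : measurableType d) (R : realType)
  (mu : {measure set Omega -> \bar R}) (f : L2 mu) : R :=
  fine ('N[mu]_2%:E[EFin \o (f : Omega -> R)]).

Definition L2inner d (Omega : measurableType d) (R : realType)
  (mu : {measure set Omega -> \bar R}) (f g : L2 mu) : R :=
  fine (\int[mu]_x ((f : Omega -> R) x * (g : Omega -> R) x)%:E).

Definition opnorm (R : realType) (U W : Type) (nU : U -> R) (nW : W -> R)
  (T : U -> W) : R := sup [set nW (T u) | u in [set u | nU u <= 1]].

Definition I01 (R : realType) : set R := [set t | 0 <= t <= 1].

Definition C1_curve (R : realType) (H : normedModType R)
  (gamma gamma' : R -> H) : Prop :=
  {within @I01 R, continuous gamma'} /\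
  forall s, @I01 R s ->
    (fun t => (t - s)^-1 *: (gamma t - gamma s)) @ within (@I01 R) s^' --> gamma' s.

Definition energy (R : realType) (H : normedModType R) (ip : H -> H -> R)
  (G : H -> H) (gamma' : R -> H) : \bar R :=
  (\int[lebesgue_measure]_(s in @I01 R) (ip (G (gamma' s)) (gamma' s))%:E)%E.

Definition Gdist (R : realType) (H : normedModType R) (ip : H -> H -> R)
  (G : H -> H) (x1 x2 : H) : R :=
  Num.sqrt (fine (ereal_inf [set e | exists gamma gamma' : R -> H,
     [/\ C1_curve gamma gamma', gamma 0 = x1, gamma 1 = x2 &
         e = energy ip G gamma']])).

Definition const_speed_geodesic (R : realType) (H : Type) (dist : H -> H -> R)
  (gamma : R -> H) : Prop :=
  forall s t, @I01 R s -> @I01 R t ->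
    dist (gamma s) (gamma t) = `|t - s| * dist (gamma 0) (gamma 1).

Definition lambda_convex (R : realType) (H : normedModType R) (F : H -> R)
  (lam : R) : Prop :=
  forall x1 x2 : H, forall th : R, 0 <= th <= 1 ->
    F ((1 - th) *: x1 + th *: x2) <=
      (1 - th) * F x1 + th * F x2 - lam * (th * (1 - th) / 2) * `|x1 - x2| ^+ 2.

Definition geod_lambda_convex (R : realType) (H : Type) (dist : H -> H -> R)
  (F : H -> R) (lam : R) : Prop :=
  forall gamma : R -> H, const_speed_geodesic dist gamma ->
  forall th : R, 0 <= th <= 1 ->
    F (gamma th) <= (1 - th) * F (gamma 0) + th * F (gamma 1)
                     - lam * (th * (1 - th) / 2) * dist (gamma 0) (gamma 1) ^+ 2.

Definition is_inner_product (R : realType) (H : normedModType R)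
  (ip : H -> H -> R) : Prop :=
  [/\ forall x y, ip x y = ip y x,
      forall (a : R) x y z, ip (a *: x + y) z = a * ip x z + ip y z &
      forall x, ip x x = `|x| ^+ 2].

Definition separable (T : topologicalType) : Prop :=
  exists D : set T, countable D /\ closure D = setT.

From HB Require Import structures.
From mathcomp Require Import all_boot all_order all_algebra.
From mathcomp Require Import all_classical all_reals all_analysis.
From mathcomp Require Import ring lra.
Import Order.TTheory GRing.Theory Num.Def Num.Theory.
Import numFieldNormedType.Exports.
Local Open Scope classical_set_scope.
Local Open Scope ring_scope.

(* The distance d is the norm of the quadratic form q(x) = <Gx, x> = |Vx|^2, which
   is positive definite because V is injective.  The segment from x1 to x2 has
   energy q(x2 - x1), while for any C^1 curve g with e = g(1) - g(0), integrating
   0 <= q(g' - e) and using the fundamental theorem of calculus for <Ge, g(s)> gives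
   energy(g) >= q(e); hence d(x1, x2)^2 = q(x2 - x1).  Equality in the triangle
   inequality of a positive definite quadratic form forces constant-speed geodesics
   to be segments g(t) = (1 - t) g(0) + t g(1), and along segments the
   lambda~-convexity for |.|_H transfers to d through |Vx| <= |V| |x| and
   |x| <= |V^-1| |Vx|. *)
Definition sym_bilinear {R : realFieldType} {H : lmodType R} (b : H -> H -> R) :=
  (forall x y, b x y = b y x) /\
  (forall a x y z, b (a *: x + y) z = a * b x z + b y z).

Section SymmetricBilinearForm.
Context {R : realFieldType} {H : lmodType R} {b : H -> H -> R}.
Hypothesis bP : sym_bilinear b.

Lemma formC x y : b x y = b y x. Proof. by case: bP. Qed.

Lemma form0l z : b 0 z = 0.
Proof.
case: bP => _ bl; have := bl 1 0 0 z.
by rewrite scale1r addr0 mul1r => ?; lra.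
Qed.

Lemma formDl x y z : b (x + y) z = b x z + b y z.
Proof. by case: bP => _ bl; rewrite -{1}(scale1r x) bl mul1r. Qed.

Lemma formZl a x z : b (a *: x) z = a * b x z.
Proof. by case: bP => _ bl; rewrite -(addr0 (a *: x)) bl form0l addr0. Qed.

Lemma formDr x y z : b z (x + y) = b z x + b z y.
Proof. by rewrite !(formC z) formDl. Qed.

Lemma formZr a x z : b z (a *: x) = a * b z x.
Proof. by rewrite !(formC z) formZl. Qed.

Lemma formBr x y z : b z (x - y) = b z x - b z y.
Proof. by rewrite formDr -scaleN1r formZr mulN1r. Qed.

Lemma form_expand s t x y : b (s *: x + t *: y) (s *: x + t *: y) =
  s ^+ 2 * b x x + 2 * s * t * b x y + t ^+ 2 * b y y.
Proof. by rewrite !formDl !formDr !formZl !formZr (formC y x); ring. Qed.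

Lemma form_polarization x y : b x y = (b (x + y) (x + y) - b (x - y) (x - y)) / 4.
Proof.
have := form_expand 1 1 x y; have := form_expand 1 (-1) x y.
rewrite !scale1r scaleN1r => -> ->; lra.
Qed.

Lemma form_convex_combination (D t : R) (x y z : H) :
  (forall w, b w w = 0 -> w = 0) ->
  b (y - x) (y - x) = t ^+ 2 * D -> b (z - y) (z - y) = (1 - t) ^+ 2 * D ->
  b (z - x) (z - x) = D -> y = (1 - t) *: x + t *: z.
Proof.
move=> bdef bxy byz bxz.
have zxE : z - x = 1 *: (y - x) + 1 *: (z - y) by rewrite !scale1r [RHS]addrC addrA subrK.
have cross : b (y - x) (z - y) = t * (1 - t) * D.
  by move: bxz; rewrite zxE form_expand bxy byz => /eqP; rewrite -subr_eq0 => /eqP; nra.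
have : t *: (z - y) + (- (1 - t)) *: (y - x) = 0.
  by apply: bdef; rewrite form_expand bxy byz (formC (z - y)) cross; ring.
have -> : t *: (z - y) + (- (1 - t)) *: (y - x) = (1 - t) *: x + t *: z - y.
  rewrite scaleNr !scalerBr !scalerBl !scale1r ?opprB ?opprD ?opprK.
  by rewrite addrCA subrKA addrA.
by move/subr0_eq ->.
Qed.

End SymmetricBilinearForm.

Lemma const_speed_geodesic_segment {R : realType} {H : lmodType R} {b : H -> H -> R}
    {dist : H -> H -> R} {g : R -> H} {t : R} :
  sym_bilinear b -> (forall w, b w w = 0 -> w = 0) ->
  (forall x y, dist x y ^+ 2 = b (y - x) (y - x)) ->
  const_speed_geodesic dist g -> 0 <= t <= 1 -> g t = (1 - t) *: g 0 + t *: g 1.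
Proof.
move=> bP bdef distE geo t01.
have I0 : @I01 R 0 by rewrite /I01 /= lexx ler01.
have I1 : @I01 R 1 by rewrite /I01 /= lexx ler01.
apply: (form_convex_combination bP (dist (g 0) (g 1) ^+ 2) _ _ _ _ bdef).
- by rewrite -distE (geo 0 t I0 t01) exprMn subr0 real_normK ?num_real.
- by rewrite -distE (geo t 1 t01 I1) exprMn real_normK ?num_real.
- by rewrite distE.
Qed.

Lemma lipschitz_continuous {R : realType} {H : normedModType R} {h : H -> R} {M : R} :
  (forall x y, `|h x - h y| <= M * `|x - y|) -> continuous h.
Proof.
move=> hM x; apply/cvgrPdist_le => e e0.
have M1 : 0 < `|M| + 1 by rewrite ltr_wpDl.
near=> y; apply: (le_trans (hM _ _)).
apply: (le_trans (y := (`|M| + 1) * `|x - y|)).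
  by apply: ler_wpM2r => //; apply: (le_trans (ler_norm M)); lra.
rewrite -ler_pdivlMl // mulrC; near: y.
by apply: cvgr_dist_le; [exact: cvg_id | exact: divr_gt0].
Unshelve. all: by end_near. Qed.

Lemma I01E (R : realType) : @I01 R = `[0, 1]%classic.
Proof. by apply/seteqP; split => x /=; rewrite in_itv. Qed.

Lemma lebesgue_measure_I01 (R : realType) : lebesgue_measure (@I01 R) = 1%E.
Proof.
by rewrite I01E (@lebesgue_measure_itv R `[0, 1]) /= lte_fin ltr01 /= oppr0 adde0.
Qed.

Section C1Curve.
Context {R : realType} {H : normedModType R} {g g' : R -> H}.
Hypothesis gC1 : C1_curve g g'.

Lemma C1_curve_continuous : {within `[0, 1], continuous g}.
Proof.
rewrite -I01E; apply/subspace_continuousP => s Is.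
have [_ /(_ s Is) g's] := gC1.
have FF : Filter (within (@I01 R) s^') by do 2 apply: within_filter; exact: nbhs_filter.
have ts0 : (fun t : R => t - s) @ within (@I01 R) s^' --> 0.
  rewrite -(subrr s); apply: cvgB; last exact: cvg_cst.
  exact: cvg_trans (cvg_within _) (cvg_within _).
(* Away from [s], [g t = g s + (t - s) *: q t] with [q] the difference quotient. *)
have := cvgD (cvg_cst (g s)) (cvgZ ts0 g's).
rewrite scale0r addr0 => /(_ FF FF FF) gq_cvg.
have gs : g @ within (@I01 R) s^' --> g s.
  apply: (cvg_trans _ gq_cvg); apply: near_eq_cvg.
  rewrite /within /= /dnbhs /within /=; apply: (@nearW _ (nbhs s)) => t ts _ /=.
  by rewrite !fctE scalerA divff ?subr_eq0 // scale1r addrC subrK.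
move=> P Pgs; move: (gs P Pgs); rewrite /within /dnbhs /within /=.
apply: (@filterS _ _ (nbhs_filter s)) => t gP It.
by have [->|ts] := eqVneq t s; [exact: nbhs_singleton Pgs | exact: gP].
Qed.

Lemma C1_curve_derive s : 0 < s < 1 ->
  (fun h => h^-1 *: (g (h + s) - g s)) @ 0^' --> g' s.
Proof.
move=> /andP[s0 s1] P.
have Is : I01 s by rewrite /I01 /= !ltW.
have [_ /(_ s Is) g's] := gC1.
move=> /g's; rewrite /= /within /= !near_simpl => gP.
have s01 : \forall t \near s, t \in `]0, 1[ by apply: near_in_itvoo; rewrite in_itv /= s0 s1.
have : \forall t \near s, t != s -> P ((t - s)^-1 *: (g t - g s)).
  apply: filterS2 s01 gP => t; rewrite in_itv /= => /andP[t0 t1] Pt ts.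
  by apply: Pt => //; rewrite /I01 /= !ltW.
move/nbhs0P; rewrite /dnbhs /within /=; apply: filterS => h Ph h0.
by rewrite [s + h]addrC addrK in Ph; apply: Ph; rewrite -subr_eq0 addrK.
Qed.

End C1Curve.

Lemma segment_C1 {R : realType} {H : normedModType R} (x e : H) :
  C1_curve (fun s : R => x + s *: e) (fun=> e).
Proof.
split; first by apply: continuous_subspaceT => y; exact: cvg_cst.
move=> s _.
have FF : Filter (within (@I01 R) s^') by do 2 apply: within_filter; exact: nbhs_filter.
apply: (cvg_trans _ (@cvg_cst _ e _ _ FF)); apply: near_eq_cvg.
rewrite /within /= /dnbhs /within /=; apply: (@nearW _ (nbhs s)) => t ts _ /=.
by rewrite opprD addrACA subrr add0r -scalerBl scalerA mulVf ?subr_eq0 // ?scale1r.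
Qed.

Section QuadraticEnergy.
Context {R : realType} {H : normedModType R} {b : H -> H -> R}.
Hypotheses (bP : sym_bilinear b) (b_ge0 : forall x, 0 <= b x x)
  (bxx_cont : continuous (fun x => b x x)).

Lemma form_continuous x : continuous (b x).
Proof.
have -> : b x = fun y => (b (x + y) (x + y) - b (x - y) (x - y)) / 4.
  by apply/funext => y; exact: form_polarization.
move=> y; apply: cvgM; last exact: cvg_cst.
apply: cvgB.
  apply: (@continuous_comp _ _ _ (fun t => x + t) (fun z => b z z)); last exact: bxx_cont.
  by apply: cvgD; [exact: cvg_cst | exact: cvg_id].
apply: (@continuous_comp _ _ _ (fun t => x - t) (fun z => b z z)); last exact: bxx_cont.
by apply: cvgB; [exact: cvg_cst | exact: cvg_id].
Qed.

Lemma Rintegral_form_derivative {g g' : R -> H} e : C1_curve g g' ->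
  Rintegral lebesgue_measure `[0, 1] (fun s => b e (g' s)) = b e (g 1 - g 0).
Proof.
move=> gC1; pose F s := b e (g s).
have Fcont : {within `[0, 1], continuous F}.
  apply: (@within_continuous_comp _ _ _ _ g (b e)); last exact: C1_curve_continuous gC1.
  by move=> x _; exact: form_continuous.
have [_ F0 F1] := (continuous_within_itvP F ltr01).1 Fcont.
have F' s : 0 < s < 1 -> (fun h => h^-1 *: (F (h + s) - F s)) @ 0^' --> b e (g' s).
  move=> s01; have := C1_curve_derive gC1 _ s01.
  move=> /(continuous_cvg _ (form_continuous e (g' s))).
  apply: cvg_trans; apply: near_eq_cvg; apply: nearW => h /=.
  by rewrite /F (formZr bP) (formBr bP).
have Fder : derivable_oo_LRcontinuous F 0 1.
  split => // s; rewrite in_itv /= => s01.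
  apply/cvg_ex; exists (b e (g' s)); apply: cvg_trans (F' s s01).
  by apply: near_eq_cvg; apply: nearW => h /=; rewrite [h *: 1]mulr1.
have F'E : {in `]0, 1[, F^`()%classic =1 (fun s => b e (g' s))}.
  by move=> s; rewrite in_itv /= => s01; apply: cvg_lim => //; exact: F'.
have g'cont : {within `[0, 1], continuous (fun s => b e (g' s))}.
  apply: (@within_continuous_comp _ _ _ _ g' (b e)); last by rewrite -I01E; case: gC1.
  by move=> x _; exact: form_continuous.
by rewrite /Rintegral (continuous_FTC2 ltr01 g'cont Fder F'E) /= /F -(formBr bP).
Qed.

Lemma form_le_energy (g g' : R -> H) : C1_curve g g' ->
  ((b (g 1 - g 0) (g 1 - g 0))%:E <=
    \int[lebesgue_measure]_(s in @I01 R) (b (g' s) (g' s))%:E)%E.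
Proof.
move=> gC1; set e := g 1 - g 0.
have int_g' (h : H -> R) : continuous h ->
    lebesgue_measure.-integrable `[0, 1] (EFin \o (h \o g')).
  move=> hc; apply: continuous_compact_integrable; first exact: segment_compact.
  by apply: within_continuous_comp => [x _|]; [exact: hc | rewrite -I01E; case: gC1].
have be_cont := form_continuous e.
have be2_cont : continuous (fun z => 2 * b e z).
  by move=> z; apply: cvgM; [exact: cvg_cst | exact: be_cont].
have lower_cont : continuous (fun z => 2 * b e z - b e e).
  by move=> z; apply: cvgB; [exact: be2_cont | exact: cvg_cst].
have pointwise s : 2 * b e (g' s) - b e e <= b (g' s) (g' s).
  have := b_ge0 (1 *: g' s + (-1) *: e); rewrite (form_expand bP) (formC bP e); lra.
have fin : (\int[lebesgue_measure]_(s in `[0%R, 1%R]) (b (g' s) (g' s))%:E)%E \is a fin_num.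
  exact: integrable_fin_num (int_g' _ bxx_cont).
rewrite I01E -(fineK fin) lee_fin.
apply: (@le_trans _ _ (\int[lebesgue_measure]_(s in `[0, 1]) (2 * b e (g' s) - b e e))).
  rewrite RintegralB //; [|exact: int_g' _ be2_cont|exact: int_g' _ (@cst_continuous _ _ _)].
  rewrite RintegralZl //; last exact: int_g' _ be_cont.
  rewrite (Rintegral_form_derivative e gC1) Rintegral_cst //.
  have -> : fine (lebesgue_measure (`[0, 1]%classic : set R)) = 1.
    by rewrite -I01E lebesgue_measure_I01.
  lra.
by apply: le_Rintegral => //; [exact: int_g' _ lower_cont | exact: int_g' _ bxx_cont].
Qed.

Lemma GdistE (ip : H -> H -> R) (G : H -> H) x1 x2 :
  (forall x y, ip (G x) y = b x y) ->
  Gdist ip G x1 x2 = Num.sqrt (b (x2 - x1) (x2 - x1)).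
Proof.
move=> ipG; rewrite /Gdist; congr Num.sqrt.
have energyE g' : energy ip G g' =
    (\int[lebesgue_measure]_(s in @I01 R) (b (g' s) (g' s))%:E)%E.
  by rewrite /energy; under eq_integral => s _ do rewrite ipG.
set S := [set e | _].
suff -> : ereal_inf S = (b (x2 - x1) (x2 - x1))%:E by [].
apply/eqP; rewrite eq_le; apply/andP; split.
  apply: ereal_inf_lbound; exists (fun s => x1 + s *: (x2 - x1)), (fun=> x2 - x1).
  split; first exact: segment_C1.
  - by rewrite scale0r addr0.
  - by rewrite scale1r addrC subrK.
  rewrite energyE integral_cst; last by rewrite I01E; exact: measurable_itv.
  by rewrite [X in (_ * X)%E](_ : _ = 1%E) ?mule1 //; exact: lebesgue_measure_I01.
apply/ereal_infP => _ [g [g' [gC1 <- <- ->]]].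
by rewrite energyE; exact: form_le_energy.
Qed.

End QuadraticEnergy.

Section L2.
Context {d : measure_display} {Omega : measurableType d} {R : realType}
  {mu : {measure set Omega -> \bar R}}.
Implicit Types f g : L2 mu.

Lemma L2norm_ge0 f : 0 <= L2norm f.
Proof. by rewrite /L2norm fine_ge0 // Lnorm_ge0. Qed.

Lemma L2normZ (a : R) f : L2norm (a *: f) = `|a| * L2norm f.
Proof.
rewrite /L2norm; have := LnormZ f a => /(congr1 fine) /= ->.
by rewrite fineM // ge0_fin_numE ?Lnorm_ge0 //; exact: Lfunction_finite.
Qed.

Lemma L2innerC f g : L2inner f g = L2inner g f.
Proof. by rewrite /L2inner; congr fine; apply: eq_integral => x _; rewrite mulrC. Qed.

Lemma L2inner_sq f : L2inner f f = L2norm f ^+ 2.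
Proof.
rewrite /L2inner /L2norm -powR_mulrn ?fine_ge0 ?Lnorm_ge0 //.
have two_neq0 : (2 : R) != 0 by [].
have := powR_Lnorm mu (EFin \o (f : Omega -> R)) two_neq0.
rewrite -(finite_norm_fine f) poweR_EFin => /(congr1 fine) /= ->.
congr fine; apply: eq_integral => x _ /=.
by rewrite powR_mulrn ?normr_ge0 // real_normK ?num_real.
Qed.

Lemma L2norm_linear_continuous {H : normedModType R} {V : {linear H -> L2 mu}} {C : R} :
  (forall x, L2norm (V x) <= C * `|x|) -> continuous (fun x => L2norm (V x)).
Proof.
move=> VC; apply: (@lipschitz_continuous _ _ _ C) => x y.
have := ler_LnormD (V (x - y)) (V y); have := ler_LnormD (V (y - x)) (V x).
rewrite -!linearD !subrK; have := VC (x - y); have := VC (y - x).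
rewrite distrC ler_norml /L2norm; lra.
Qed.

End L2.

Section AdjointForm.
Context {R : realType} {H : normedModType R} {d : measure_display}
  {Omega : measurableType d} {mu : {measure set Omega -> \bar R}}
  {ip : H -> H -> R} {V : {linear H -> L2 mu}} {VT : L2 mu -> H}.
Hypotheses (ipP : sym_bilinear ip)
  (VT_adj : forall f x, ip (VT f) x = L2inner f (V x)).

Lemma adjoint_form_sym_bilinear : sym_bilinear (fun x y => ip (VT (V x)) y).
Proof.
have qC x y : ip (VT (V x)) y = ip (VT (V y)) x by rewrite !VT_adj L2innerC.
(* [VT] need not be linear: linearity in the first slot comes from symmetry. *)
by split=> // a x y z; rewrite !(qC _ z) (formDr ipP) (formZr ipP).
Qed.

Lemma adjoint_form_sqr x : ip (VT (V x)) x = L2norm (V x) ^+ 2.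
Proof. by rewrite VT_adj L2inner_sq. Qed.

Lemma Gdist_adjointE (C : R) x y : (forall x, L2norm (V x) <= C * `|x|) ->
  Gdist ip (fun x => VT (V x)) x y = L2norm (V (y - x)).
Proof.
move=> VC; have q_ge0 z : 0 <= ip (VT (V z)) z by rewrite adjoint_form_sqr sqr_ge0.
have q_cont : continuous (fun z => ip (VT (V z)) z).
  have VN_cont := L2norm_linear_continuous VC.
  have -> : (fun z => ip (VT (V z)) z) = fun z => L2norm (V z) * L2norm (V z).
    by apply/funext => z; rewrite adjoint_form_sqr expr2.
  by move=> z; apply: cvgM; exact: VN_cont.
rewrite (GdistE adjoint_form_sym_bilinear q_ge0 q_cont) // adjoint_form_sqr.
by rewrite sqrtr_sqr ger0_norm // L2norm_ge0.
Qed.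

End AdjointForm.

Lemma le_opnorm (R : realType) (U W : lmodType R) (nU : U -> R) (nW : W -> R)
    (T : {linear U -> W}) (C : R) u :
  (forall u, 0 <= nU u) -> (forall a u, nU (a *: u) = `|a| * nU u) ->
  (forall a w, nW (a *: w) = `|a| * nW w) -> (forall u, nW (T u) <= C * nU u) ->
  nW (T u) <= opnorm nU nW T * nU u.
Proof.
move=> nU_ge0 nUZ nWZ TC.
have [nu0|nu_neq0] := eqVneq (nU u) 0.
  by rewrite nu0 mulr0; have := TC u; rewrite nu0 mulr0.
have nu_gt0 : 0 < nU u by rewrite lt_def nu_neq0 nU_ge0.
pose S := [set nW (T x) | x in [set x | nU x <= 1]].
have S_ub : has_ubound S.
  exists `|C| => _ [x /= x1 <-]; apply: le_trans (TC x) _.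
  apply: le_trans (ler_wpM2r (nU_ge0 x) (ler_norm C)) _.
  by rewrite -[leRHS]mulr1 ler_wpM2l.
have u1 : nU ((nU u)^-1 *: u) <= 1 by rewrite nUZ ger0_norm ?invr_ge0 // mulVf.
have := ub_le_sup S_ub (ex_intro2 _ _ ((nU u)^-1 *: u) u1 erefl).
rewrite linearZ nWZ ger0_norm ?invr_ge0 // => Tu_le.
by rewrite /opnorm -ler_pdivrMr // mulrC.
Qed.

Lemma convexity_modulus_scale (R : realFieldType) (l N M L n : R) :
  0 <= L -> 0 <= n -> L <= N * n -> n <= M * L ->
  (if 0 < l then l / N ^+ 2 else l * M ^+ 2) * L ^+ 2 <= l * n ^+ 2.
Proof.
move=> L0 n0 LNn nML; case: ifPn => [l_gt0 | l_le0].
  have [->|N0] := eqVneq N 0.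
    by rewrite expr0n invr0 mulr0 mul0r mulr_ge0 ?sqr_ge0 // ltW.
  have LNn2 : L ^+ 2 <= (N * n) ^+ 2.
    by rewrite ler_sqr ?nnegrE //; exact: le_trans LNn.
  apply: le_trans (ler_wpM2l _ LNn2) _; first by rewrite divr_ge0 ?sqr_ge0 ?ltW.
  by rewrite exprMn mulrA divfK ?expf_neq0.
rewrite -mulrA -exprMn; apply: ler_wnM2l; first by rewrite leNgt.
by rewrite ler_sqr ?nnegrE //; exact: le_trans nML.
Qed.

Theorem mainTheorem4 (R : realType) (H : completeNormedModType R)
  (ip : H -> H -> R) (d : measure_display) (Omega : measurableType d)
  (mu : {measure set Omega -> \bar R})
  (V : {linear H -> L2 mu}) (Vinv : {linear L2 mu -> H}) (VT : L2 mu -> H)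
  (F : H -> R) (lamt : R) :
  is_inner_product ip ->
  separable H ->
  (* V is bounded *)
  (exists C : R, forall x, L2norm (V x) <= C * `|x|) ->
  (* V is invertible with bounded inverse Vinv (as a map into L^2 modulo a.e.) *)
  (forall f g : L2 mu, (f : Omega -> R) = g %[ae mu] -> Vinv f = Vinv g) ->
  (forall x, Vinv (V x) = x) ->
  (forall f : L2 mu, (V (Vinv f) : Omega -> R) = f %[ae mu]) ->
  (exists C : R, forall f, `|Vinv f| <= C * L2norm f) ->
  (* VT is the Hilbert-space adjoint of V *)
  (forall (f : L2 mu) (x : H), ip (VT f) x = L2inner f (V x)) ->
  lambda_convex F lamt ->
  let G := fun x => VT (V x) in
  let dist := Gdist ip G in
  let lam := if 0 < lamt
             then lamt / (opnorm (fun x : H => `|x|) (@L2norm _ _ _ mu) V) ^+ 2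
             else lamt * (opnorm (@L2norm _ _ _ mu) (fun x : H => `|x|) Vinv) ^+ 2 in
  geod_lambda_convex dist F lam.
Proof.
move=> [ipC ipD _] _ [C VC] _ VinvK _ [C' VinvC] VT_adj Fconv G dist lam.
have ipP : sym_bilinear ip := conj ipC ipD.
have V_bound u : L2norm (V u) <= opnorm (fun x : H => `|x|) (@L2norm _ _ _ mu) V * `|u|.
  by apply: le_opnorm; [exact: normr_ge0 | exact: normrZ | exact: L2normZ | exact: VC].
have Vinv_bound u : `|u| <= opnorm (@L2norm _ _ _ mu) (fun x : H => `|x|) Vinv * L2norm (V u).
  rewrite -{1}(VinvK u).
  by apply: le_opnorm; [exact: L2norm_ge0 | exact: L2normZ | exact: normrZ | exact: VinvC].
have q_def w : ip (G w) w = 0 -> w = 0.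
  rewrite (adjoint_form_sqr VT_adj) => /eqP; rewrite sqrf_eq0 => /eqP Vw0.
  by have := Vinv_bound w; rewrite Vw0 mulr0 normr_le0 => /eqP.
have distE x y : dist x y = L2norm (V (y - x)) by exact: Gdist_adjointE VC.
move=> g g_geo t t01; set x0 := g 0; set x1 := g 1.
have qP := adjoint_form_sym_bilinear ipP VT_adj.
have gtE : g t = (1 - t) *: x0 + t *: x1.
  apply: (const_speed_geodesic_segment qP q_def _ g_geo t01) => x y.
  by rewrite distE (adjoint_form_sqr VT_adj).
have lamL : lam * L2norm (V (x1 - x0)) ^+ 2 <= lamt * `|x0 - x1| ^+ 2.
  apply: convexity_modulus_scale; [exact: L2norm_ge0 | exact: normr_ge0 | |].
  - by rewrite distrC; exact: V_bound.
  - by rewrite distrC; exact: Vinv_bound.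
have c_ge0 : 0 <= t * (1 - t) / 2.
  by case/andP: t01 => t0 t1; rewrite divr_ge0 ?mulr_ge0 ?subr_ge0.
have := Fconv x0 x1 t t01; rewrite -gtE distE; nra.
Qed.
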